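(* Let $n,x$ be integers with $1<x<n$, so that $G=C_{2n}(x,1,n)$ is a $5$-regular circulant graph. If $n\equiv 0\pmod 3$, $x\equiv 1\pmod 3$ and $1<x\leq \tfrac{2n}{3}$, then $G$ is word-representable.
   Context: Two distinct letters $x,y$ alternate in a word $w$ if, after deleting all other letters from $w$, the resulting word is of the form $xyxy\cdots$ or $yxyx\cdots$ (of even or odd length). A graph $G=(V,E)$ is word-representable if there is a word $w$ over the alphabet $V$, containing every letter of $V$ at least once, such that for all distinct $x,y\in V$, $xy\in E$ if and only if $x$ and $y$ alternate in $w$. For an integer $m$ and a set $R$ of positive integers each at most $m/2$, the circulant graph $C_m(R)$ has vertex set $\{0,1,\dots,m-1\}$, with $i$ and $j$ adjacent iff $\min(|i-j|,\,m-|i-j|)\in R$. $C_{2n}(x,1,n)$ denotes the circulant graph on $2n$ vertices with jump set $\{1,x,n\}$; it is $5$-regular exactly when $1<x<n$. *)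

From mathcomp Require Import all_boot all_order.
Set Implicit Arguments. Unset Strict Implicit. Unset Printing Implicit Defensive.

Definition alternate (T : eqType) (w : seq T) (x y : T) : bool :=
  let u := [seq z <- w | (z == x) || (z == y)] in
  sorted (fun a b => a != b) u.

Definition word_representable (T : finType) (e : rel T) : Prop :=
  exists w : seq T,
    (forall v : T, v \in w) /\
    (forall x y : T, x != y -> (e x y <-> alternate w x y)).

Definition circ_dist (m i j : nat) : nat :=
  let d := if i <= j then j - i else i - j in minn d (m - d).

Definition circulant (m : nat) (R : pred nat) : rel 'I_m :=
  fun i j => circ_dist m i j \in R.
Arguments circulant m R : clear implicits.

Definition C2n_x1n (n x : nat) : rel 'I_(2 * n) :=
  circulant (2 * n) (fun d => [|| d == 1, d == x | d == n]).
Arguments C2n_x1n n x : clear implicits.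

From mathcomp Require Import all_boot all_order.
From mathcomp Require Import zify.
Set Implicit Arguments. Unset Strict Implicit. Unset Printing Implicit Defensive.

(* G is properly 3-colorable, and every 3-colorable graph is word-representable.
   For the latter, list the vertices color class by color class and concatenate,
   for each vertex z in that order, a block containing every other vertex once and
   z twice, the neighbors of z lying exactly between the two copies of z.  The
   blocks are arranged so that an edge xy with col x < col y appears as x..y in the
   block of z unless z lies between x and y in the list; restricted to {x, y} the
   word is then (xy)..(xy) xyx (yx)..(yx) yxy (xy)..(xy), which alternates, whereas
   for a non-edge xy the block of x contains xx. *)

Section Words.
Variable T : eqType.
Implicit Types (a b : T) (s : seq T).

Lemma filter_pairC s a b :
  [seq v <- s | (v == a) || (v == b)] = [seq v <- s | (v == b) || (v == a)].
Proof. by apply: eq_filter => v; rewrite orbC. Qed.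

Lemma alternateC s a b : alternate s a b = alternate s b a.
Proof. by rewrite /alternate filter_pairC. Qed.

Lemma not_sorted_neq_repeat s1 s2 a :
  ~~ sorted (fun u v => u != v) (s1 ++ a :: a :: s2).
Proof. by case: s1 => [|b s1] /=; rewrite ?cat_path /= eqxx ?andbF. Qed.

Lemma path_neq_pairs (S : eqType) (f : S -> seq T) (l : seq S) a b :
  a != b -> {in l, forall z, f z = [:: a; b]} ->
  path (fun u v => u != v) b (flatten (map f l)) /\ last b (flatten (map f l)) = b.
Proof.
move=> ab; elim: l => [|z l IH] fl //=.
rewrite fl ?mem_head //= eq_sym ab /=.
by apply: IH => w wl; apply: fl; rewrite inE wl orbT.
Qed.

Lemma index_cat_lt s1 s2 a b :
  a \in s1 -> b \notin s1 -> index a (s1 ++ s2) < index b (s1 ++ s2).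
Proof.
move=> ain /negbTE bnin; rewrite !index_cat ain bnin.
by rewrite ltn_addr ?index_mem.
Qed.

Lemma uniq_cat_notin s1 s2 a : uniq (s1 ++ s2) -> a \in s2 -> a \notin s1.
Proof. by rewrite cat_uniq => /and3P[_ /hasPn notin _] /notin. Qed.

End Words.

Lemma filter_enum_pair (T : finType) (q : pred T) (a b : T) :
  a != b -> ~~ (q a && q b) ->
  [seq v <- enum T | ((v == a) || (v == b)) && q v] = [seq v <- [:: a; b] | q v].
Proof.
move=> ab; have single c : [seq v <- enum T | v == c] = [:: c].
  by apply: filter_pred1_uniq; rewrite ?enum_uniq ?mem_enum.
case qa: (q a); case qb: (q b) => //= _; rewrite qa qb;
  [rewrite -(single a) | rewrite -(single b) | rewrite -(filter_pred0 (enum T))];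
  apply: eq_filter => v; case: (eqVneq v a) => [->|_]; rewrite ?qa ?(negbTE ab) //=;
  by case: (eqVneq v b) => [->|]; rewrite ?qb ?andbF.
Qed.

Section ThreeColorable.
Variables (T : finType) (e : rel T) (col : T -> 'I_3).
Hypothesis e_sym : symmetric e.
Hypothesis col_proper : forall u v, e u v -> col u != col v.
Implicit Types (u v x y z : T).

Definition vorder := sort (fun u v => col u <= col v) (enum T).

Definition before u v := index u vorder < index v vorder.

Lemma mem_vorder v : v \in vorder.
Proof. by rewrite mem_sort mem_enum. Qed.

Lemma vorder_uniq : uniq vorder.
Proof. by rewrite sort_uniq enum_uniq. Qed.

Lemma vorder_split v : exists s1 s2, vorder = s1 ++ v :: s2.
Proof. by case/splitPr: (mem_vorder v) => s1 s2; exists s1, s2. Qed.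

Lemma index_vorder_inj u v : u != v -> index u vorder != index v vorder.
Proof. by apply: contraNneq => /index_inj -> //; apply: mem_vorder. Qed.

Lemma before_col u v : col u < col v -> before u v.
Proof.
have sorted_vorder : sorted (fun u v => col u <= col v) vorder.
  by apply: sort_sorted => ? ?; apply: leq_total.
move=> lt_uv; rewrite /before ltnNge; apply: contraTN lt_uv => le_vu.
rewrite -leqNgt; apply: (sorted_leq_index _ _ sorted_vorder) le_vu; rewrite ?mem_vorder //.
by move=> ? ? ?; apply: leq_trans.
Qed.

Lemma before_cat s1 s2 u v : vorder = s1 ++ s2 -> u \in s1 -> v \in s2 -> before u v.
Proof.
move=> def us1 vs2; have := vorder_uniq; rewrite /before def => uniq_s.
by apply: index_cat_lt => //; apply: uniq_cat_notin uniq_s vs2.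
Qed.

Lemma before_neq u v : before u v -> u != v.
Proof. by apply: contraTneq => ->; rewrite /before ltnn. Qed.

Lemma before_asym u v : before u v -> ~~ before v u.
Proof. by rewrite /before -leqNgt => /ltnW. Qed.

(* Same-color vertices go to the outer slots according to [before], the successor
   color of z before its predecessor color; [in_slot] puts z itself in slots 2 and
   5, so that exactly the neighbors of z (slots 3 and 4) alternate with z. *)
Definition slot z v : nat :=
  if col v == col z then (if before z v then 0 else 7)
  else if val (col v) == (col z).+1 %% 3 then (if e z v then 3 else 1)
  else (if e z v then 4 else 6).

Lemma slot_values z v : slot z v \in [:: 0; 1; 3; 4; 6; 7].
Proof. by rewrite /slot; repeat case: ifP. Qed.

Lemma slot_edge z v : (2 < slot z v < 5) = e z v.
Proof.
rewrite /slot; case: eqP => [same|_]; last by repeat case: ifP.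
have -> : e z v = false by apply: negbTE; apply/negP => /col_proper; rewrite same eqxx.
by case: ifP.
Qed.

(* If z has the color of x or of y, the order of the two is decided by [before];
   otherwise x comes first iff col x is the successor of col z, i.e. iff
   col z is not strictly between col x and col y. *)
Lemma slot_order x y z : col x < col y -> z != x -> z != y ->
  if before x z && before z y then slot z y < slot z x else slot z x < slot z y.
Proof.
move=> lt_xy zx zy.
have := index_vorder_inj zx; have := index_vorder_inj zy.
have := @before_col z x; have := @before_col x z.
have := @before_col z y; have := @before_col y z.
have := ltn_ord (col x); have := ltn_ord (col y); have := ltn_ord (col z).
rewrite /slot /before -!val_eqE /=.
by repeat case: ifP; lia.
Qed.

Definition in_slot z k v := if v == z then (k == 2) || (k == 5) else slot z v == k.

Definition block z := flatten [seq [seq v <- enum T | in_slot z k v] | k <- iota 0 8].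

Lemma filter_block z a b : a != b -> (forall k, ~~ (in_slot z k a && in_slot z k b)) ->
  [seq v <- block z | (v == a) || (v == b)] =
  flatten [seq [seq v <- [:: a; b] | in_slot z k v] | k <- iota 0 8].
Proof.
move=> ab disj; rewrite filter_flatten -map_comp; congr flatten; apply: eq_map => k /=.
by rewrite -filter_predI; apply: filter_enum_pair.
Qed.

Lemma block_other z a b : a != z -> b != z -> slot z a < slot z b ->
  [seq v <- block z | (v == a) || (v == b)] = [:: a; b].
Proof.
move=> az bz lt_ab.
have ab : a != b by apply: contraTneq lt_ab => ->; rewrite ltnn.
rewrite filter_block // => [|k]; rewrite /= /in_slot (negbTE az) (negbTE bz).
  move: lt_ab (slot_values z a) (slot_values z b).
  by case: (slot z a) => [|[|[|[|[|[|[|[|?]]]]]]]];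
     case: (slot z b) => [|[|[|[|[|[|[|[|?]]]]]]]].
by apply/andP => -[/eqP <- /eqP same]; rewrite same ltnn in lt_ab.
Qed.

Lemma block_self z v : v != z ->
  [seq u <- block z | (u == z) || (u == v)] =
  if slot z v < 2 then [:: v; z; z] else if slot z v < 5 then [:: z; v; z] else [:: z; z; v].
Proof.
move=> vz; have vals := slot_values z v.
rewrite filter_block 1?eq_sym // => [|k]; rewrite /= /in_slot eqxx (negbTE vz).
  by move: vals; case: (slot z v) => [|[|[|[|[|[|[|[|?]]]]]]]].
by apply/andP => -[/orP[] /eqP -> /eqP same]; rewrite same in vals.
Qed.

Lemma block_pair x y z : col x < col y -> z != x -> z != y ->
  [seq v <- block z | (v == x) || (v == y)] =
  if before x z && before z y then [:: y; x] else [:: x; y].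
Proof.
move=> lt_xy zx zy; have := slot_order lt_xy zx zy.
rewrite !(eq_sym z) in zx zy; case: ifP => _ lt_slot.
  by rewrite filter_pairC block_other.
by rewrite block_other.
Qed.

Lemma block_edge u v : e u v -> [seq w <- block u | (w == u) || (w == v)] = [:: u; v; u].
Proof.
move=> euv; have vu : v != u by apply: contraTneq (col_proper euv) => ->; rewrite negbK.
have /andP[gt2 lt5] : 2 < slot u v < 5 by rewrite slot_edge.
by rewrite block_self // lt5 ltnNge (ltnW gt2).
Qed.

Definition word := flatten [seq block z | z <- vorder].

Lemma mem_word v : v \in word.
Proof.
apply/flattenP; exists (block v); first exact/map_f/mem_vorder.
apply/flattenP; exists [seq u <- enum T | in_slot v 2 u].
  by apply: (map_f (fun k => [seq u <- enum T | in_slot v k u])).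
by rewrite mem_filter /in_slot eqxx mem_enum.
Qed.

Lemma filter_word (p : pred T) :
  [seq v <- word | p v] = flatten [seq [seq v <- block z | p v] | z <- vorder].
Proof. by rewrite /word filter_flatten -map_comp. Qed.

Lemma alternate_nonedge x y : x != y -> ~~ e x y -> ~~ alternate word x y.
Proof.
move=> xy nexy; have [s1 [s2 def]] := vorder_split x.
rewrite /alternate filter_word def map_cat flatten_cat /= block_self 1?eq_sym //.
move: (slot_edge x y) (slot_values x y); rewrite (negbTE nexy).
case: (slot x y) => [|[|[|[|[|[|[|[|?]]]]]]]] //= _ _;
  by [exact: not_sorted_neq_repeat | rewrite -cat_rcons; exact: not_sorted_neq_repeat].
Qed.

Lemma vorder_split2 x y : before x y -> exists s1 s2 s3, vorder = s1 ++ x :: s2 ++ y :: s3.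
Proof.
move=> xy_before; have [s1 [s' def_x]] := vorder_split x.
have ys' : y \in s'.
  have := mem_vorder y; rewrite def_x mem_cat inE eq_sym (negbTE (before_neq xy_before)).
  case/orP=> [ys1|//]; have := before_asym xy_before.
  by rewrite (before_cat def_x ys1) ?mem_head.
by case/splitPr: ys' def_x => s2 s3 def_x; exists s1, s2, s3.
Qed.

Lemma filter_block_split x y s1 s2 s3 :
  col x < col y -> vorder = s1 ++ x :: s2 ++ y :: s3 ->
  [/\ {in s1, forall z, [seq v <- block z | (v == x) || (v == y)] = [:: x; y]},
      {in s2, forall z, [seq v <- block z | (v == x) || (v == y)] = [:: y; x]} &
      {in s3, forall z, [seq v <- block z | (v == x) || (v == y)] = [:: x; y]}].
Proof.
move=> lt_xy def.
have def_1 : vorder = rcons s1 x ++ s2 ++ y :: s3 by rewrite cat_rcons.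
have def_2 : vorder = (s1 ++ x :: s2) ++ y :: s3 by rewrite -catA.
have def_3 : vorder = rcons (s1 ++ x :: s2) y ++ s3 by rewrite cat_rcons -catA.
have in_rcons (s : seq T) w : w \in rcons s w by rewrite mem_rcons mem_head.
have outside z : ~~ (before x z && before z y) -> z != x -> z != y ->
    [seq v <- block z | (v == x) || (v == y)] = [:: x; y].
  by move=> /negbTE out zx zy; rewrite block_pair // out.
split=> z zs.
- have zx := before_cat def zs (mem_head x _).
  have zy : before z y by apply: (before_cat def_2); rewrite ?mem_cat ?zs ?mem_head.
  by rewrite outside ?before_neq // (negbTE (before_asym zx)).
- have xz : before x z by apply: (before_cat def_1); rewrite ?in_rcons ?mem_cat ?zs.
  have zy : before z y by apply: (before_cat def_2); rewrite ?mem_head ?mem_cat ?inE ?zs ?orbT.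
  by rewrite block_pair ?xz ?zy ?(before_neq zy) // eq_sym before_neq.
- have xz : before x z.
    by apply: (before_cat def_3); rewrite ?mem_rcons ?inE ?mem_cat ?mem_head ?orbT.
  have yz : before y z by apply: (before_cat def_3); rewrite ?in_rcons.
  by rewrite outside ?(negbTE (before_asym yz)) ?andbF // eq_sym before_neq.
Qed.

Lemma alternate_edge x y : e x y -> col x < col y -> alternate word x y.
Proof.
move=> exy lt_xy; have xy : x != y by apply: before_neq; apply: before_col.
have [s1 [s2 [s3 def]]] := vorder_split2 (before_col lt_xy).
have [f1 f2 f3] := filter_block_split lt_xy def.
have fy : [seq v <- block y | (v == x) || (v == y)] = [:: y; x; y].
  by rewrite filter_pairC block_edge // e_sym.
rewrite /alternate filter_word def map_cat flatten_cat /= block_edge //.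
rewrite map_cat flatten_cat /= fy.
have yx : y != x by rewrite eq_sym.
have [path1 last1] := path_neq_pairs xy f1.
have [path2 last2] := path_neq_pairs yx f2.
have [path3 last3] := path_neq_pairs xy f3.
apply: (@path_sorted _ _ y).
by rewrite cat_path path1 last1 /= cat_path path2 last2 /= path3 xy yx.
Qed.

Lemma three_colorable_word_representable : word_representable e.
Proof.
exists word; split=> [|x y xy]; first exact: mem_word.
split=> [exy | alt]; last by apply: contraTT alt; apply: alternate_nonedge.
have := col_proper exy; rewrite -val_eqE neq_ltn => /orP[lt_xy | lt_yx].
  exact: alternate_edge.
by rewrite alternateC; apply: alternate_edge; rewrite // e_sym.
Qed.

End ThreeColorable.

Lemma circ_dist_sym m i j : circ_dist m i j = circ_dist m j i.
Proof. by rewrite /circ_dist; case: (leqP i j); case: (leqP j i) => *; lia. Qed.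

Lemma C2n_x1n_sym n x : symmetric (C2n_x1n n x).
Proof. by move=> u v; rewrite /C2n_x1n /circulant circ_dist_sym. Qed.

(* With n = 3k, color i by i + band i (mod 3), the bands being three arcs of 2k
   vertices: a step of 1 or x (x = 1 mod 3, x <= 2k) raises the residue by 1 and the
   band by 0 or 1 (mod 3), a step of n keeps the residue and moves the band. *)
Definition band n i := if i < 2 * (n %/ 3) then 0 else if i < 4 * (n %/ 3) then 1 else 2.

Definition C2n_color n (v : 'I_(2 * n)) : 'I_3 :=
  Ordinal (ltn_pmod (v + band n v) (isT : 0 < 3)).

Lemma C2n_color_proper n x : n %% 3 = 0 -> x %% 3 = 1 -> 3 * x <= 2 * n ->
  forall u v, C2n_x1n n x u v -> C2n_color u != C2n_color v.
Proof.
move=> n3 x3 x_le u v; have := ltn_ord u; have := ltn_ord v.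
rewrite /C2n_x1n /circulant /circ_dist unfold_in /C2n_color -val_eqE /= /band.
by repeat case: ifP; lia.
Qed.

Theorem corollary4 (n x : nat) :
  1 < x -> x < n ->
  n %% 3 = 0 -> x %% 3 = 1 -> 3 * x <= 2 * n ->
  word_representable (C2n_x1n n x).
Proof.
(* 1 < x < n only makes the graph 5-regular. *)
move=> _ _ n3 x3 x_le.
apply: (three_colorable_word_representable (col := @C2n_color n)).
  exact: C2n_x1n_sym.
exact: C2n_color_proper.
Qed.
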